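(* Let $\mathcal{R}=(\mathcal{S},R_1,\ldots,R_k)$ be a relational structure (all arities $n_i\ge2$) with a relational message passing model as in the context satisfying the Bounded Jacobians assumption, and let $\mathcal{G}=\mathcal{G}(\mathcal{S},\mathbf{B})$ with weights $w$. Let $\sigma,\tau\in\mathcal{S}$ be such that $w_{\sigma\to\tau}>0$, and assume $w^3_{\max}>0$. Then $$\left\Vert \frac{\partial \mathbf{h}_{\sigma}^{(2)}}{\partial \mathbf{h}_{\tau}^{(0)}} \right\Vert_{1} \leq \left( \prod_{\ell=0}^{1} \alpha^{(\ell)} \beta^{(\ell)} \right) w_{\tau}^{\mathrm{out}} w_{\sigma}^{\mathrm{in}} \left(1 - \frac{w_{\sigma \to \tau}}{w_{\max}^3} \bigl(1 - k(\sigma, \tau)\bigr)\right),$$ where $k(\sigma,\tau)$ is the Ollivier–Ricci curvature of the edge $\sigma\to\tau$ in $\mathcal{G}$.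
   Context: A relational structure $\mathcal{R}=(\mathcal{S},R_1,\ldots,R_k)$ consists of a finite set $\mathcal{S}$ of entities and relations $R_i\subseteq\mathcal{S}^{n_i}$ of arity $n_i$; throughout, $n_i\ge 2$ for all $i$. A relational message passing model on $\mathcal{R}$ consists of: feature vectors $\mathbf{h}_\sigma^{(t)}\in\mathbb{R}^{p_t}$ for $\sigma\in\mathcal{S}$, $t\ge 0$, with $\mathbf{h}_\sigma^{(0)}=\mathbf{x}_\sigma$ the input features (all later features are regarded as functions of the input features); message functions $\boldsymbol{\psi}_i^{(t)}:(\mathbb{R}^{p_t})^{n_i}\to\mathbb{R}^{p_{i,t}}$; update functions $\boldsymbol{\phi}^{(t)}:\mathbb{R}^{p_{1,t}}\times\cdots\times\mathbb{R}^{p_{k,t}}\to\mathbb{R}^{p_{t+1}}$; and shift operators $\mathbf{A}^{R_i}\in\mathbb{R}_{\ge 0}^{\mathcal{S}^{n_i}}$ with $\mathbf{A}^{R_i}_{\zeta_1,\ldots,\zeta_{n_i}}=0$ whenever $(\zeta_1,\ldots,\zeta_{n_i})\notin R_i$. The update rule is $\mathbf{h}_\sigma^{(t+1)}=\boldsymbol{\phi}^{(t)}(\mathbf{m}_{\sigma,1}^{(t)},\ldots,\mathbf{m}_{\sigma,k}^{(t)})$ with $\mathbf{m}_{\sigma,i}^{(t)}=\sum_{\boldsymbol{\xi}\in\mathcal{S}^{n_i-1}}\mathbf{A}^{R_i}_{\sigma,\boldsymbol{\xi}}\,\boldsymbol{\psi}_i^{(t)}(\mathbf{h}_\sigma^{(t)},\mathbf{h}_{\xi_1}^{(t)},\ldots,\mathbf{h}_{\xi_{n_i-1}}^{(t)})$.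 Aggregated influence matrix: $\tilde{\mathbf{A}}^{R_i}_{\sigma,\tau}=\sum_{j=1}^{n_i-1}\sum_{\boldsymbol{\xi}\in\mathcal{S}^{n_i-2}}\mathbf{A}^{R_i}_{\sigma,\xi_1,\ldots,\xi_{j-1},\tau,\xi_j,\ldots,\xi_{n_i-2}}$, $\tilde{\mathbf{A}}=\sum_{i=1}^k\tilde{\mathbf{A}}^{R_i}$; $\gamma=\max_{\sigma}\sum_{\tau}\tilde{\mathbf{A}}_{\sigma,\tau}$; augmented influence matrix $\mathbf{B}=\gamma\mathbf{I}+\tilde{\mathbf{A}}$. Influence graph $\mathcal{G}(\mathcal{S},\mathbf{B})$: weighted directed graph on $\mathcal{S}$ with an edge $\xi\to\eta$ (self-loops allowed) iff $\mathbf{B}_{\eta,\xi}>0$, of weight $w_{\xi\to\eta}=\mathbf{B}_{\eta,\xi}$; write $w_{\xi\to\eta}=0$ if there is no edge. $w_\xi^{\mathrm{out}}=\sum_\eta w_{\xi\to\eta}$, $w_\eta^{\mathrm{in}}=\sum_\xi w_{\xi\to\eta}$. Ollivier–Ricci curvature of a directed edge $\sigma\to\tau$ with $w_{\sigma\to\tau}>0$: define probability measures $\mu_\tau^{\mathrm{out}}(\xi)=w_{\tau\to\xi}/w_\tau^{\mathrm{out}}$ and $\mu_\sigma^{\mathrm{in}}(\xi)=w_{\xi\to\sigma}/w_\sigma^{\mathrm{in}}$ on $\mathcal{S}$; let $d(\xi,\eta)$ be the shortest directed path distance from $\xi$ to $\eta$ in $\mathcal{G}$ using edge weights as lengths ($d(\xi,\xi)=0$);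 $W(\mu,\nu)=\inf_{\pi}\sum_{\xi,\eta}\pi(\xi,\eta)d(\xi,\eta)$ over couplings $\pi$ of $\mu,\nu$; and $k(\sigma,\tau)=1-W(\mu_\sigma^{\mathrm{in}},\mu_\tau^{\mathrm{out}})/w_{\sigma\to\tau}$. $w^3_{\max}$ is the maximum weighted length of a $3$-step path from an in-neighbour of $\sigma$ to an out-neighbour of $\tau$ through the edge $\sigma\to\tau$: $w^3_{\max}=\max\{w_{\xi\to\sigma}+w_{\sigma\to\tau}+w_{\tau\to\eta} : w_{\xi\to\sigma}>0,\ w_{\tau\to\eta}>0\}$. Bounded Jacobians assumption: every $\boldsymbol{\psi}_i^{(\ell)}$ and $\boldsymbol{\phi}^{(\ell)}$ is differentiable, the Jacobian of $\boldsymbol{\psi}_i^{(\ell)}$ with respect to any one of its vector arguments has induced $1$-norm at most $\beta_i^{(\ell)}$ everywhere, and the Jacobian of $\boldsymbol{\phi}^{(\ell)}$ with respect to any one message argument has induced $1$-norm at most $\alpha^{(\ell)}$ everywhere; $\beta^{(\ell)}=\max_i\beta_i^{(\ell)}$. $\|\cdot\|_1$ is the induced matrix $1$-norm (maximum absolute column sum). *)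

From HB Require Import structures.
From mathcomp Require Import all_boot all_order all_algebra.
From mathcomp Require Import all_classical all_reals all_analysis.
Unset Printing Implicit Defensive.
Import Order.TTheory GRing.Theory Num.Theory.
Import numFieldNormedType.Exports.
Local Open Scope ring_scope.
Local Open Scope classical_set_scope.

Section Defs.
Context {R : realType}.

Definition norm1 {a b : nat} (M : 'M[R]_(a, b)) : R :=
  \big[Num.max/0]_(j < b) \sum_(i < a) `|M i j|.

(** Standard Jacobian matrix (rows = output coordinates, columns = input
    coordinates) of f at x.  The library's [jacobian] is the transpose
    (it acts on row vectors: v *m jacobian f x = 'd f x v). *)
Definition jac {a b : nat} (f : 'rV[R]_a -> 'rV[R]_b) (x : 'rV[R]_a) : 'M[R]_(b, a) :=
  (jacobian f x)^T.

Definition upd {I : eqType} {T : Type} (a : I -> T) (j : I) (v : T) : I -> T :=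
  fun j' => if j' == j then v else a j'.

Context {S : finType} {k : nat} {m : 'I_k -> nat}.
(* Relation R_i has arity n_i = (m i).+2 (so n_i >= 2); a tuple in S^{n_i}
   is a finite function 'I_(m i).+2 -> S. *)
Variable (A : forall i : 'I_k, {ffun 'I_(m i).+2 -> S} -> R).

Definition consf {n : nat} (s : S) (xi : {ffun 'I_n.+1 -> S}) : {ffun 'I_n.+2 -> S} :=
  [ffun j => if unlift ord0 j is Some j' then xi j' else s].

Definition aggA (i : 'I_k) (s t : S) : R :=
  \sum_(j < (m i).+1) \sum_(xi : {ffun 'I_(m i).+1 -> S} | xi j == t) A i (consf s xi).

Definition Atot (s t : S) : R := \sum_(i < k) aggA i s t.

Definition gamma : R := \big[Num.max/0]_(s : S) \sum_(t : S) Atot s t.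

Definition Bmat (s t : S) : R := (if s == t then gamma else 0) + Atot s t.

(** Weight of the edge x -> y of the influence graph: B_{y,x} (0 if no edge). *)
Definition w (x y : S) : R := Bmat y x.

Definition wout (x : S) : R := \sum_(y : S) w x y.
Definition win (y : S) : R := \sum_(x : S) w x y.

(** Weighted length of the directed walk x = v_0 -> v_1 -> ... -> v_r, p = [v_1;...;v_r]. *)
Definition walk_len (x : S) (p : seq S) : R := \sum_(e <- zip (x :: p) p) w e.1 e.2.

Definition dist (x y : S) : R :=
  inf [set L : R | exists p : seq S,
         [/\ path (fun a b => 0 < w a b) x p, last x p = y & L = walk_len x p]].

Definition coupling (pi : S -> S -> R) (mu nu : S -> R) : Prop :=
  [/\ forall a b, 0 <= pi a b,
      forall a, \sum_(b : S) pi a b = mu a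
    & forall b, \sum_(a : S) pi a b = nu b].

Definition wass (mu nu : S -> R) : R :=
  inf [set c : R | exists pi : S -> S -> R,
         coupling pi mu nu /\ c = \sum_(a : S) \sum_(b : S) pi a b * dist a b].

Definition mu_out (t : S) : S -> R := fun x => w t x / wout t.
Definition mu_in (s : S) : S -> R := fun x => w x s / win s.

Definition curv (s t : S) : R := 1 - wass (mu_in s) (mu_out t) / w s t.

Definition w3max (s t : S) : R :=
  \big[Num.max/0]_(x : S | 0 < w x s) \big[Num.max/0]_(y : S | 0 < w t y)
     (w x s + w s t + w t y).

Context {p : nat -> nat} {q : nat -> 'I_k -> nat}.
Variable psi : forall (l : nat) (i : 'I_k), ('I_(m i).+2 -> 'rV[R]_(p l)) -> 'rV[R]_(q l i).
Variable phi : forall l : nat, (forall i : 'I_k, 'rV[R]_(q l i)) -> 'rV[R]_(p l.+1).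

Fixpoint feat (x : S -> 'rV[R]_(p 0%N)) (l : nat) {struct l} : S -> 'rV[R]_(p l) :=
  match l as l0 return S -> 'rV[R]_(p l0) with
  | 0%N => x
  | l'.+1 => fun s => phi l' (fun i =>
      \sum_(xi : {ffun 'I_(m i).+1 -> S})
         A i (consf s xi) *: psi l' i (fun j => feat x l' (consf s xi j)))
  end.

End Defs.

From HB Require Import structures.
From mathcomp Require Import all_boot all_order all_algebra.
From mathcomp Require Import all_classical all_reals all_analysis.
From mathcomp Require Import ring lra.
Import Order.TTheory GRing.Theory Num.Theory.
Import numFieldNormedType.Exports.
Local Open Scope ring_scope.

(* After two layers, the chain rule and the Jacobian bounds give the bound
   alpha_0 beta_0 alpha_1 beta_1 sum_y M_{sigma,y} M_{y,tau}, where M_{u,y} is the total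
   weight with which y occurs in the messages aggregated at u.  M is dominated entrywise by
   the augmented influence matrix, so the sum is at most
   (B^2)_{sigma,tau} = w_out(tau) w_in(sigma) sum_y mu_in(y) mu_out(y).
   Under the product coupling of mu_in(sigma) and mu_out(tau) the diagonal costs nothing and
   every other pair (x, y) is joined by the walk x -> sigma -> tau -> y of length at most
   w3max, so W(mu_in, mu_out) <= w3max (1 - sum_y mu_in(y) mu_out(y)), which rearranges into
   the claim. *)

Section vnorm1.
Context {R : realType}.

Definition vnorm1 {n : nat} (v : 'rV[R]_n) : R := \sum_i `|v 0 i|.

Lemma vnorm10 n : vnorm1 (0 : 'rV[R]_n) = 0.
Proof. by rewrite /vnorm1 big1 // => i _; rewrite mxE normr0. Qed.

Lemma vnorm1D {n} (u v : 'rV[R]_n) : vnorm1 (u + v) <= vnorm1 u + vnorm1 v.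
Proof. by rewrite -big_split; apply: ler_sum => i _; rewrite mxE ler_normD. Qed.

Lemma vnorm1Z {n} a (v : 'rV[R]_n) : vnorm1 (a *: v) = `|a| * vnorm1 v.
Proof. by rewrite /vnorm1 mulr_sumr; apply: eq_bigr => i _; rewrite mxE normrM. Qed.

Lemma vnorm1_sum {n} {I : Type} (r : seq I) (f : I -> 'rV[R]_n) :
  vnorm1 (\sum_(i <- r) f i) <= \sum_(i <- r) vnorm1 (f i).
Proof.
elim/big_rec2: _ => [|i x u _ IH]; first by rewrite vnorm10.
by rewrite (le_trans (vnorm1D _ _)) // lerD2l.
Qed.

Lemma vnorm1_delta n (j : 'I_n) : vnorm1 (delta_mx 0 j : 'rV[R]_n) = 1.
Proof.
rewrite /vnorm1 (bigD1 j) //= big1 ?addr0; first by rewrite mxE !eqxx normr1.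
by move=> i /negbTE ji; rewrite mxE ji andbF normr0.
Qed.

Lemma norm1_ge0 {a b} (M : 'M[R]_(a, b)) : 0 <= norm1 M.
Proof. exact: bigmax_ge_id. Qed.

Lemma norm1_tr_lin1_mx a b (L : {linear 'rV[R]_a -> 'rV[R]_b}) :
  norm1 (lin1_mx L)^T = \big[Num.max/0]_(j < a) vnorm1 (L (delta_mx 0 j)).
Proof. by apply: eq_bigr => j _; apply: eq_bigr => i _; rewrite !mxE. Qed.

Lemma linear_vnorm1_le {a b} (L : {linear 'rV[R]_a -> 'rV[R]_b}) c :
  norm1 (lin1_mx L)^T <= c -> forall v, vnorm1 (L v) <= c * vnorm1 v.
Proof.
rewrite norm1_tr_lin1_mx => Lc v; rewrite {1}(row_sum_delta v) linear_sum /=.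
apply: le_trans (vnorm1_sum _ _) _; rewrite mulr_sumr.
apply: ler_sum => j _; rewrite linearZ /= vnorm1Z mulrC ler_wpM2r //.
exact: le_trans (le_bigmax _ _ j) Lc.
Qed.

Lemma vnorm1_le_linear {a b} (L : {linear 'rV[R]_a -> 'rV[R]_b}) c : 0 <= c ->
  (forall v, vnorm1 (L v) <= c * vnorm1 v) -> norm1 (lin1_mx L)^T <= c.
Proof.
move=> c_ge0 Lc; rewrite norm1_tr_lin1_mx; apply: bigmax_le => // j _.
by have := Lc (delta_mx 0 j); rewrite vnorm1_delta mulr1.
Qed.

End vnorm1.

Section diff_bounded.
Context {R : realType}.

Lemma continuous_sum {T : topologicalType} {W : normedModType R} {I : Type}
    (r : seq I) (g : I -> T -> W) :
  (forall i, continuous (g i)) -> continuous (fun x => \sum_(i <- r) g i x).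
Proof.
move=> g_cont; elim: r => [|i r IH].
  rewrite (_ : (fun _ => _) = cst 0); first exact: cst_continuous.
  by apply: funext => x; rewrite big_nil.
rewrite (_ : (fun _ => _) = g i + fun x => \sum_(j <- r) g j x).
  by move=> x; apply: continuousD; [exact: g_cont | exact: IH].
by apply: funext => x; rewrite big_cons.
Qed.

Lemma linear_mx_continuous {a b} {W : normedModType R}
    (f : {linear 'M[R]_(a, b) -> W}) : continuous f.
Proof.
have -> : (f : _ -> _) = fun M => \sum_i \sum_j M i j *: f (delta_mx i j).
  apply: funext => M; rewrite {1}(matrix_sum_delta M) linear_sum.
  by apply: eq_bigr => i _; rewrite linear_sum; apply: eq_bigr => j _; rewrite linearZ.
apply: continuous_sum => i; apply: continuous_sum => j M.
exact/continuousZr_tmp/coord_continuous.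
Qed.

Lemma diff_affine {a b} {W : normedModType R} (L : {linear 'M[R]_(a, b) -> W}) (C : W) x :
  differentiable (fun y => C + L y) x /\ 'd (fun y => C + L y) x = L :> (_ -> _).
Proof.
have L_cont : continuous L by exact: linear_mx_continuous.
have dL : differentiable L x by exact: linear_differentiable.
split; first exact: differentiableD.
rewrite (diffD (differentiable_cst _ _) dL) diff_cst diff_lin //.
by apply: funext => y /=; rewrite add0r.
Qed.

Lemma diff_linear_comp {a b} {V W : normedModType R} (L : {linear 'M[R]_(a, b) -> W})
    {g : V -> 'M[R]_(a, b)} {x} :
  differentiable g x -> differentiable (L \o g) x /\ 'd (L \o g) x = L \o 'd g x :> (_ -> _).
Proof.
move=> dg; have L_cont : continuous L by exact: linear_mx_continuous.
have dL : differentiable L (g x) by exact: linear_differentiable.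
split; first exact: differentiable_comp.
by rewrite diff_comp // diff_lin.
Qed.

Lemma diff_sum {V W : normedModType R} {I : Type} (r : seq I) {f : I -> V -> W} {x} :
    (forall i, differentiable (f i) x) ->
  differentiable (fun y => \sum_(i <- r) f i y) x /\
  'd (fun y => \sum_(i <- r) f i y) x = (fun h => \sum_(i <- r) 'd (f i) x h) :> (_ -> _).
Proof.
move=> df; elim: r => [|i r [dr drE]].
  under eq_fun do rewrite big_nil.
  split; first exact: differentiable_cst.
  by rewrite diff_cst; apply: funext => h; rewrite big_nil.
have -> : (fun y => \sum_(j <- i :: r) f j y) = f i + (fun y => \sum_(j <- r) f j y).
  by apply: funext => y; rewrite big_cons.
split; first exact: differentiableD.
by rewrite diffD //; apply: funext => h /=; rewrite big_cons drE.
Qed.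

Definition diff_bounded {c d : nat} (g : 'rV[R]_c -> 'rV[R]_d) (v0 : 'rV[R]_c) (K : R) :=
  differentiable g v0 /\ forall h, vnorm1 ('d g v0 h) <= K * vnorm1 h.

Lemma jac_vnorm1_le {c d} {g : 'rV[R]_c -> 'rV[R]_d} {v0 K} :
  norm1 (jac g v0) <= K -> forall h, vnorm1 ('d g v0 h) <= K * vnorm1 h.
Proof. exact: linear_vnorm1_le. Qed.

Lemma diff_bounded_jac {c d} {g : 'rV[R]_c -> 'rV[R]_d} {v0 K} :
  0 <= K -> diff_bounded g v0 K -> norm1 (jac g v0) <= K.
Proof. by move=> K_ge0 [_ gK]; exact: vnorm1_le_linear. Qed.

Lemma diff_bounded_sum {c d} {I : Type} (r : seq I) {f : I -> 'rV[R]_c -> 'rV[R]_d}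
    {v0} {K : I -> R} :
  (forall i, diff_bounded (f i) v0 (K i)) ->
  diff_bounded (fun v => \sum_(i <- r) f i v) v0 (\sum_(i <- r) K i).
Proof.
move=> fK; have [dsum dsumE] := diff_sum r (fun i => (fK i).1).
split=> // h; rewrite dsumE mulr_suml.
by apply: le_trans (vnorm1_sum _ _) _; apply: ler_sum => i _; exact: (fK i).2.
Qed.

Lemma diff_boundedZ {c d} a {f : 'rV[R]_c -> 'rV[R]_d} {v0 K} :
  diff_bounded f v0 K -> diff_bounded (fun v => a *: f v) v0 (`|a| * K).
Proof.
move=> [df fK]; split; first exact: differentiableZ.
by move=> h; rewrite (diffZ _ df) /= vnorm1Z -mulrA ler_wpM2l.
Qed.

Lemma diff_bounded_upd {I : eqType} {c} (x : I -> 'rV[R]_c) t u v0 :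
  diff_bounded (fun v => upd x t v u) v0 (u == t)%:R.
Proof.
rewrite /upd; case: (u =P t) => _.
  by split=> // h; rewrite diff_val mul1r.
split; first exact: differentiable_cst.
by move=> h; rewrite diff_cst mul0r vnorm10.
Qed.

End diff_bounded.

Section chain_rule.
Context {R : realType} {n b : nat} {d : 'I_n -> nat}.

(* Gluing the family into one block row, [F (G_j v)_j] becomes
   [Fm (\sum_j G_j v *m block_emb j)], whose derivative splits into the partial
   derivatives of [F]. *)
Definition block_emb (j : 'I_n) : 'M[R]_(d j, \sum_j' d j') :=
  \mxrow_j' dfwith (fun j0 => 0 : 'M[R]_(d j, d j0)) j 1%:M j'.

Lemma submxrow_block_emb j (y : 'rV[R]_(d j)) j' :
  submxrow (y *m block_emb j) j' = dfwith (fun j0 => 0 : 'rV[R]_(d j0)) j y j'.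
Proof.
rewrite mul_mxrow mxrowK; case: (eqVneq j j') => [<-|ji].
  by rewrite !dfwithin mulmx1.
by rewrite !dfwithout // mulmx0.
Qed.

Lemma mxrow_block_emb (a : forall j, 'rV[R]_(d j)) :
  \mxrow_j a j = \sum_j a j *m block_emb j.
Proof.
apply/mxrowP => j'; rewrite mxrowK submxrow_sum (bigD1 j') //= submxrow_block_emb.
rewrite dfwithin big1 ?addr0 // => j ji.
by rewrite submxrow_block_emb dfwithout // eq_sym.
Qed.

Context {F : (forall j, 'rV[R]_(d j)) -> 'rV[R]_b} {beta : R}.
Hypothesis F_diff :
  forall N : 'rV[R]_(\sum_j d j),
  differentiable (fun N' : 'rV[R]_(\sum_j d j) => F (fun j => submxrow N' j)) N.
Hypothesis F_jac : forall (a : forall j, 'rV[R]_(d j)) j,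
  norm1 (jac (fun y => F (dfwith a j y)) (a j)) <= beta.

Let Fm (N : 'rV[R]_(\sum_j d j)) : 'rV[R]_b := F (fun j => submxrow N j).

Lemma partial_diff_le (a : forall j, 'rV[R]_(d j)) j z :
  vnorm1 ('d Fm (\mxrow_j a j) (z *m block_emb j)) <= beta * vnorm1 z.
Proof.
pose C := \mxrow_j a j - a j *m block_emb j.
have [d_aff d_affE] := diff_affine (mulmxr (block_emb j)) C (a j).
have FaE : (fun y => F (dfwith a j y)) = Fm \o (fun y => C + y *m block_emb j).
  apply: funext => y; rewrite /Fm /=; congr F; apply: functional_extensionality_dep => j'.
  rewrite submxrowD submxrowB mxrowK !submxrow_block_emb.
  by case: (eqVneq j j') => [<-|ji]; rewrite ?dfwithin ?subrr ?add0r // !dfwithout // subr0 addr0.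
have aff_aj : C + a j *m block_emb j = \mxrow_j a j by rewrite subrK.
have := jac_vnorm1_le (F_jac a j) z.
by rewrite FaE (diff_comp d_aff) aff_aj //= d_affE.
Qed.

Lemma diff_bounded_chain {c} {G : forall j, 'rV[R]_c -> 'rV[R]_(d j)} {v0} {K : 'I_n -> R} :
  (forall j, diff_bounded (G j) v0 (K j)) ->
  diff_bounded (fun v => F (fun j => G j v)) v0 (beta * \sum_j K j).
Proof.
move=> GK.
pose T v := \sum_j G j v *m block_emb j.
have FGE : (fun v => F (fun j => G j v)) = Fm \o T.
  apply: funext => v; rewrite /Fm /T /= -mxrow_block_emb.
  by congr F; apply: functional_extensionality_dep => j; rewrite mxrowK.
have dGemb j := diff_linear_comp (mulmxr (block_emb j)) (GK j).1.
have [dT dTE] := diff_sum (index_enum 'I_n) (fun j => (dGemb j).1).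
have dFm : differentiable Fm (T v0) by exact: F_diff.
rewrite FGE; split; first exact: differentiable_comp.
move=> h; rewrite diff_comp //= dTE linear_sum /= -mulrA mulr_suml mulr_sumr.
apply: le_trans (vnorm1_sum _ _) (ler_sum _ _) => j _; rewrite (dGemb j).2 /=.
have beta_ge0 : 0 <= beta := le_trans (norm1_ge0 _) (F_jac (fun _ => 0) j).
rewrite /T -mxrow_block_emb (le_trans (partial_diff_le _ _ _)) //.
by rewrite ler_wpM2l // (GK j).2.
Qed.

End chain_rule.

Section chain_rule_rows.
Context {R : realType}.

Lemma dfwith_upd (I : eqType) (T : Type) (a : I -> T) j v : dfwith a j v = upd a j v.
Proof.
apply: funext => j'; rewrite /upd; case: (eqVneq j' j) => [->|ji]; first exact: dfwithin.
by rewrite dfwithout // eq_sym.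
Qed.

Lemma diff_bounded_chain_rows {nn b e c} {F : ('I_nn -> 'rV[R]_b) -> 'rV[R]_e} {beta}
    {G : 'I_nn -> 'rV[R]_c -> 'rV[R]_b} {v0} {K : 'I_nn -> R} :
  (forall M : 'M[R]_(nn, b), differentiable (fun M' : 'M[R]_(nn, b) => F (fun j => row j M')) M) ->
  (forall a j, norm1 (jac (fun v => F (upd a j v)) (a j)) <= beta) ->
  (forall j, diff_bounded (G j) v0 (K j)) ->
  diff_bounded (fun v => F (fun j => G j v)) v0 (beta * \sum_j K j).
Proof.
move=> F_diff F_jac GK.
apply: (diff_bounded_chain _ _ GK) => [N|a j].
  pose rows N' : 'M[R]_(nn, b) := \matrix_j submxrow N' j.
  have rows_lin : linear rows.
    move=> r N1 N2; apply/row_matrixP => j; rewrite linearP !rowK /=.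
    by apply/rowP => i; rewrite !mxE.
  pose rowsL : {linear _ -> 'M[R]_(nn, b)} :=
    HB.pack rows (GRing.isLinear.Build _ _ _ _ rows rows_lin).
  have -> : (fun N' => F (fun j => submxrow N' j)) = (fun M' => F (fun j => row j M')) \o rowsL.
    by apply: funext => N' /=; congr F; apply: funext => j; rewrite rowK.
  by apply: differentiable_comp; [exact/linear_differentiable/linear_mx_continuous | exact: F_diff].
by under eq_fun do rewrite dfwith_upd.
Qed.

End chain_rule_rows.

Section message_passing.
Context {R : realType} {S : finType} {k : nat} {m : 'I_k -> nat}.
Variable A : forall i : 'I_k, {ffun 'I_(m i).+2 -> S} -> R.
Hypothesis A_ge0 : forall i z, 0 <= A i z.

Definition msg_weight (u y : S) : R :=
  \sum_i \sum_(xi : {ffun 'I_(m i).+1 -> S})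
    A i (consf u xi) * \sum_(j < (m i).+2) (consf u xi j == y)%:R.

Lemma msg_weight_ge0 u y : 0 <= msg_weight u y.
Proof.
by apply: sumr_ge0 => i _; apply: sumr_ge0 => xi _; apply: mulr_ge0 => //; exact: sumr_ge0.
Qed.

Lemma sum_consf_msg_weight u (f : S -> R) :
  \sum_i \sum_(xi : {ffun 'I_(m i).+1 -> S}) A i (consf u xi) * \sum_j f (consf u xi j)
  = \sum_y msg_weight u y * f y.
Proof.
have count_f n (z : 'I_n -> S) : \sum_j f (z j) = \sum_y (\sum_j ((z j == y)%:R : R)) * f y.
  under [RHS]eq_bigr do rewrite mulr_suml.
  rewrite exchange_big; apply: eq_bigr => j _.
  rewrite (bigD1 (z j)) //= eqxx mul1r big1 ?addr0 // => y /negbTE zy.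
  by rewrite eq_sym zy mul0r.
under eq_bigr do under eq_bigr do rewrite count_f mulr_sumr.
under eq_bigr do rewrite exchange_big; rewrite exchange_big.
apply: eq_bigr => y _; rewrite /msg_weight mulr_suml; apply: eq_bigr => i _.
by rewrite mulr_suml; apply: eq_bigr => xi _; rewrite mulrA.
Qed.

Fixpoint msg_weight_pow (l : nat) (u y : S) : R :=
  if l is l'.+1 then \sum_z msg_weight u z * msg_weight_pow l' z y else (u == y)%:R.

Lemma msg_weight_pow_ge0 l u y : 0 <= msg_weight_pow l u y.
Proof.
elim: l u => [|l IH] u /=; first exact: ler0n.
by apply: sumr_ge0 => z _; rewrite mulr_ge0 ?msg_weight_ge0.
Qed.

Context {p : nat -> nat} {q : nat -> 'I_k -> nat}.
Context {psi : forall (l : nat) (i : 'I_k), ('I_(m i).+2 -> 'rV[R]_(p l)) -> 'rV[R]_(q l i)}.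
Context {phi : forall l : nat, (forall i : 'I_k, 'rV[R]_(q l i)) -> 'rV[R]_(p l.+1)}.
Context {alpha beta : nat -> R}.
Hypothesis psi_diff : forall l i (M : 'M[R]_((m i).+2, p l)),
  differentiable (fun M' : 'M[R]_((m i).+2, p l) => psi l i (fun j => row j M')) M.
Hypothesis phi_diff : forall l (M : 'rV[R]_(\sum_(i < k) q l i)),
  differentiable (fun M' : 'rV[R]_(\sum_(i < k) q l i) =>
    phi l (fun i => @submxrow R k (q l) 1 M' i)) M.
Hypothesis psi_jac : forall l i (a : 'I_(m i).+2 -> 'rV[R]_(p l)) (j : 'I_(m i).+2),
  norm1 (jac (fun v => psi l i (upd a j v)) (a j)) <= beta l.
Hypothesis phi_jac : forall l (a : forall i : 'I_k, 'rV[R]_(q l i)) (i : 'I_k),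
  norm1 (jac (fun v => phi l (@dfwith 'I_k (fun i0 => 'rV[R]_(q l i0)) a i v)) (a i))
    <= alpha l.

Lemma diff_bounded_layer {l c} {g : S -> 'rV[R]_c -> 'rV[R]_(p l)} {v0} {K : S -> R} s :
  (forall u, diff_bounded (g u) v0 (K u)) ->
  diff_bounded (fun v => phi l (fun i => \sum_(xi : {ffun 'I_(m i).+1 -> S})
      A i (consf s xi) *: psi l i (fun j => g (consf s xi j) v)))
    v0 (alpha l * beta l * \sum_y msg_weight s y * K y).
Proof.
move=> gK.
have msgK i : diff_bounded (fun v => \sum_(xi : {ffun 'I_(m i).+1 -> S})
      A i (consf s xi) *: psi l i (fun j => g (consf s xi j) v))
    v0 (\sum_(xi : {ffun 'I_(m i).+1 -> S}) A i (consf s xi) * (beta l * \sum_j K (consf s xi j))).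
  apply: diff_bounded_sum => xi.
  have := diff_boundedZ (A i (consf s xi))
    (diff_bounded_chain_rows (psi_diff l i) (psi_jac l i) (fun j => gK (consf s xi j))).
  by rewrite ger0_norm.
have msgE : \sum_i \sum_(xi : {ffun 'I_(m i).+1 -> S})
      A i (consf s xi) * (beta l * \sum_j K (consf s xi j))
    = beta l * \sum_y msg_weight s y * K y.
  rewrite -sum_consf_msg_weight mulr_sumr; apply: eq_bigr => i _.
  by rewrite mulr_sumr; apply: eq_bigr => xi _; rewrite mulrCA.
by rewrite -mulrA -msgE; have := diff_bounded_chain (phi_diff l) (phi_jac l) msgK.
Qed.

Lemma diff_bounded_feat (x : S -> 'rV[R]_(p 0%N)) t l u :
  diff_bounded (fun v => feat A psi phi (upd x t v) l u) (x t)
    ((\prod_(i < l) (alpha i * beta i)) * msg_weight_pow l u t).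
Proof.
elim: l u => [|l IH] u; first by rewrite big_ord0 mul1r; exact: diff_bounded_upd.
suff -> : \prod_(i < l.+1) (alpha i * beta i) * msg_weight_pow l.+1 u t
    = alpha l * beta l * \sum_y msg_weight u y *
        (\prod_(i < l) (alpha i * beta i) * msg_weight_pow l y t).
  exact: diff_bounded_layer u IH.
by rewrite big_ord_recr /= !mulr_sumr; apply: eq_bigr => y _; ring.
Qed.

End message_passing.

Lemma inf_ge0 {R : realType} (E : set R) : (forall x, E x -> 0 <= x) -> 0 <= inf E.
Proof.
move=> E_ge0; have [[x Ex]|E0] := pselect (E !=set0)%classic.
  by apply: lb_le_inf => //; exists x.
by rewrite inf_out // => -[].
Qed.

Section influence_graph.
Context {R : realType} {S : finType} {k : nat} {m : 'I_k -> nat}.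
Variable A : forall i : 'I_k, {ffun 'I_(m i).+2 -> S} -> R.
Hypothesis A_ge0 : forall i z, 0 <= A i z.

Lemma Atot_ge0 u y : 0 <= Atot A u y.
Proof. by do 3![apply: sumr_ge0 => ? _]. Qed.

Lemma gamma_ge0 : 0 <= gamma A.
Proof. exact: bigmax_ge_id. Qed.

Lemma sum_Atot_le_gamma u : \sum_y Atot A u y <= gamma A.
Proof. exact: (le_bigmax _ (fun u => \sum_y Atot A u y) u). Qed.

Lemma Atot_le_gamma u y : Atot A u y <= gamma A.
Proof.
apply: le_trans (sum_Atot_le_gamma u).
by rewrite (bigD1 y) //= lerDl sumr_ge0 // => ? _; exact: Atot_ge0.
Qed.

Lemma w_ge0 x y : 0 <= w A x y.
Proof. by rewrite addr_ge0 ?Atot_ge0 //; case: eqP; rewrite ?gamma_ge0. Qed.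

Lemma gamma_le_w_diag x : gamma A <= w A x x.
Proof. by rewrite /w /Bmat eqxx lerDl Atot_ge0. Qed.

Lemma gamma_gt0 {s t} : 0 < w A s t -> 0 < gamma A.
Proof.
move=> wst; rewrite lt_def gamma_ge0 andbT; apply: contraTneq wst => g0.
by rewrite -leNgt /w /Bmat g0 if_same add0r -g0 Atot_le_gamma.
Qed.

Lemma gamma_gt0_relations : 0 < gamma A -> (0 < k)%N.
Proof.
case: (posnP k) => // k0; rewrite lt_def gamma_ge0 andbT => /eqP[].
apply/eqP; rewrite eq_le gamma_ge0 andbT; apply: bigmax_le => // u _.
by rewrite big1 // => y _; rewrite /Atot big1 // => -[i ik]; exfalso; rewrite k0 in ik.
Qed.

Lemma win_gt0 s : 0 < gamma A -> 0 < win A s.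
Proof.
move=> g_gt0; rewrite /win (bigD1 s) //=.
by rewrite ltr_wpDr ?(lt_le_trans g_gt0 (gamma_le_w_diag s)) // sumr_ge0 // => x _; exact: w_ge0.
Qed.

Lemma wout_gt0 t : 0 < gamma A -> 0 < wout A t.
Proof.
move=> g_gt0; rewrite /wout (bigD1 t) //=.
by rewrite ltr_wpDr ?(lt_le_trans g_gt0 (gamma_le_w_diag t)) // sumr_ge0 // => x _; exact: w_ge0.
Qed.

Lemma consf0 n (u : S) (xi : {ffun 'I_n.+1 -> S}) : consf u xi ord0 = u.
Proof. by rewrite ffunE unlift_none. Qed.

Lemma consf_lift n (u : S) (xi : {ffun 'I_n.+1 -> S}) j : consf u xi (lift ord0 j) = xi j.
Proof. by rewrite ffunE liftK. Qed.

Definition msg_mass (u : S) : R := \sum_i \sum_(xi : {ffun 'I_(m i).+1 -> S}) A i (consf u xi).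

Lemma aggAE i u y : aggA A i u y =
  \sum_(xi : {ffun 'I_(m i).+1 -> S}) A i (consf u xi) * \sum_(j < (m i).+1) (xi j == y)%:R.
Proof.
rewrite /aggA; under eq_bigr do rewrite big_mkcond /=.
rewrite exchange_big; apply: eq_bigr => xi _; rewrite mulr_sumr.
by apply: eq_bigr => j _; case: (xi j == y); rewrite ?mulr1 ?mulr0.
Qed.

Lemma msg_weightE u y : msg_weight A u y = (u == y)%:R * msg_mass u + Atot A u y.
Proof.
rewrite /msg_weight /msg_mass /Atot mulr_sumr -big_split; apply: eq_bigr => i _.
rewrite aggAE mulr_sumr -big_split; apply: eq_bigr => xi _ /=.
rewrite big_ord_recl consf0 mulrDr mulrC; congr (_ + _).
by congr (_ * _); apply: eq_bigr => j _; rewrite consf_lift.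
Qed.

(* Every message has a position besides the receiver's, and [Atot] counts those. *)
Lemma msg_mass_le_gamma u : msg_mass u <= gamma A.
Proof.
apply: le_trans (sum_Atot_le_gamma u).
have sum_msg : \sum_y msg_weight A u y = msg_mass u + \sum_y Atot A u y.
  under eq_bigr do rewrite msg_weightE.
  rewrite big_split /= -mulr_suml (bigD1 u) //= eqxx big1 ?addr0 ?mul1r // => y /negbTE uy.
  by rewrite eq_sym uy.
have : msg_mass u *+ 2 <= \sum_y msg_weight A u y.
  under eq_bigr do rewrite -[msg_weight A u _]mulr1.
  rewrite -sum_consf_msg_weight // /msg_mass -!sumrMnl; apply: ler_sum => i _.
  rewrite -sumrMnl; apply: ler_sum => xi _.
  by rewrite sumr_const card_ord -mulr_natr ler_wpM2l // ler_nat.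
by rewrite sum_msg mulr2n lerD2l.
Qed.

(* The receiver [u] itself sits at position 0 of every message; those occurrences are paid for
   by the [gamma * I] part of [B]. *)
Lemma msg_weight_le_w u y : msg_weight A u y <= w A y u.
Proof.
rewrite msg_weightE /w /Bmat lerD2r eq_sym.
by case: eqP => _; rewrite ?mul1r ?mul0r ?msg_mass_le_gamma.
Qed.

Lemma msg_weight_pow2_le s t : msg_weight_pow A 2 s t <= \sum_y w A y s * w A t y.
Proof.
apply: ler_sum => y _; rewrite (bigD1 t) //= eqxx mulr1 big1 ?addr0.
  by rewrite ler_pM ?msg_weight_ge0 ?msg_weight_le_w.
by move=> z /negbTE ->; rewrite mulr0.
Qed.

Lemma walk_len_ge0 x p : 0 <= walk_len A x p.
Proof. by apply: sumr_ge0 => e _; exact: w_ge0. Qed.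

Lemma dist_ge0 a b : 0 <= dist A a b.
Proof. by apply: inf_ge0 => _ [p [_ _ ->]]; exact: walk_len_ge0. Qed.

Lemma dist_le_walk a b p :
  path (fun a b => 0 < w A a b) a p -> last a p = b -> dist A a b <= walk_len A a p.
Proof.
move=> wp pb; apply: ge_inf; last by exists p.
by exists 0 => _ [q [_ _ ->]]; exact: walk_len_ge0.
Qed.

Lemma dist_xx a : dist A a a = 0.
Proof.
apply/eqP; rewrite eq_le dist_ge0 andbT.
by have := @dist_le_walk a a [::] isT erefl; rewrite /walk_len big_nil.
Qed.

Lemma dist_le_w3max a b s t :
  0 < w A a s -> 0 < w A s t -> 0 < w A t b -> dist A a b <= w3max A s t.
Proof.
move=> was wst wtb; have := @dist_le_walk a b [:: s; t; b]; rewrite /= was wst wtb.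
move=> /(_ isT erefl) /le_trans; apply.
rewrite /walk_len /= !big_cons big_nil addr0 addrA /w3max.
by rewrite (bigD1 a) //= le_max (bigD1 b) //= le_max lexx.
Qed.

Lemma wass_le_coupling {mu nu : S -> R} {P : S -> S -> R} :
  coupling P mu nu -> wass A mu nu <= \sum_a \sum_b P a b * dist A a b.
Proof.
move=> P_mu_nu; apply: ge_inf; last by exists P.
exists 0 => _ [P' [[P'_ge0 _ _] ->]].
by do 2![apply: sumr_ge0 => ? _]; rewrite mulr_ge0 ?dist_ge0.
Qed.

Lemma coupling_prod {mu nu : S -> R} :
  (forall a, 0 <= mu a) -> (forall b, 0 <= nu b) ->
  \sum_a mu a = 1 -> \sum_b nu b = 1 -> coupling (fun a b => mu a * nu b) mu nu.
Proof.
move=> mu_ge0 nu_ge0 mu1 nu1; split=> [a b|a|b]; first exact: mulr_ge0.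
  by rewrite -mulr_sumr nu1 mulr1.
by rewrite -mulr_suml mu1 mul1r.
Qed.

Lemma wass_le_overlap {s t} : 0 < w A s t ->
  wass A (mu_in A s) (mu_out A t)
    <= w3max A s t * (1 - \sum_y mu_in A s y * mu_out A t y).
Proof.
move=> wst; have g_gt0 := gamma_gt0 wst.
have mu_in_ge0 a : 0 <= mu_in A s a by rewrite divr_ge0 ?w_ge0 ?ltW ?win_gt0.
have mu_out_ge0 b : 0 <= mu_out A t b by rewrite divr_ge0 ?w_ge0 ?ltW ?wout_gt0.
have mu_in1 : \sum_a mu_in A s a = 1 by rewrite -mulr_suml divff // gt_eqF ?win_gt0.
have mu_out1 : \sum_b mu_out A t b = 1 by rewrite -mulr_suml divff // gt_eqF ?wout_gt0.
apply: le_trans (wass_le_coupling (coupling_prod mu_in_ge0 mu_out_ge0 mu_in1 mu_out1)) _.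
rewrite -{1}mu_in1 -sumrB mulr_sumr; apply: ler_sum => a _.
rewrite (bigD1 a) //= dist_xx mulr0 add0r.
have -> : mu_in A s a - mu_in A s a * mu_out A t a = \sum_(b | b != a) mu_in A s a * mu_out A t b.
  by rewrite -mulr_sumr -{1}[mu_in A s a]mulr1 -mulrBr -mu_out1 (bigD1 a) //= addrC addrK.
rewrite mulr_sumr; apply: ler_sum => b _.
have [->|P_neq0] := eqVneq (mu_in A s a * mu_out A t b) 0; first by rewrite mul0r mulr0.
have was : 0 < w A a s.
  by rewrite lt_def w_ge0 andbT; apply: contra_neq P_neq0 => was0; rewrite /mu_in was0 !mul0r.
have wtb : 0 < w A t b.
  by rewrite lt_def w_ge0 andbT; apply: contra_neq P_neq0 => wtb0; rewrite /mu_out wtb0 mul0r mulr0.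
have P_ge0 := mulr_ge0 (mu_in_ge0 a) (mu_out_ge0 b).
by rewrite [_ * dist _ _ _]mulrC ler_wpM2r // dist_le_w3max.
Qed.

Lemma two_step_weight_le s t : 0 < w A s t -> 0 < w3max A s t ->
  \sum_y w A y s * w A t y
    <= wout A t * win A s * (1 - w A s t / w3max A s t * (1 - curv A s t)).
Proof.
move=> wst w3_gt0; have g_gt0 := gamma_gt0 wst.
have win_neq0 := gt_eqF (win_gt0 s g_gt0); have wout_neq0 := gt_eqF (wout_gt0 t g_gt0).
have -> : \sum_y w A y s * w A t y
    = wout A t * win A s * \sum_y mu_in A s y * mu_out A t y.
  rewrite mulr_sumr; apply: eq_bigr => y _.
  by rewrite /mu_in /mu_out; field; rewrite win_neq0 wout_neq0.
rewrite ler_pM2l ?mulr_gt0 ?win_gt0 ?wout_gt0 //.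
have := wass_le_overlap wst; rewrite /curv.
set W := wass _ _ _; set M := w3max A s t; move=> WM.
have -> : w A s t / M * (1 - (1 - W / w A s t)) = W / M by field; rewrite !gt_eqF.
have : W / M <= 1 - \sum_y mu_in A s y * mu_out A t y by rewrite ler_pdivrMr // mulrC.
lra.
Qed.

End influence_graph.

Theorem mainTheorem4 (R : realType) (S : finType) (k : nat) (m : 'I_k -> nat)
  (Rel : forall i : 'I_k, pred {ffun 'I_(m i).+2 -> S})
  (A : forall i : 'I_k, {ffun 'I_(m i).+2 -> S} -> R)
  (p : nat -> nat) (q : nat -> 'I_k -> nat)
  (psi : forall (l : nat) (i : 'I_k), ('I_(m i).+2 -> 'rV[R]_(p l)) -> 'rV[R]_(q l i))
  (phi : forall l : nat, (forall i : 'I_k, 'rV[R]_(q l i)) -> 'rV[R]_(p l.+1))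
  (alpha : nat -> R) (betai : nat -> 'I_k -> R) :
  (forall i z, 0 <= A i z) ->
  (forall i z, z \notin Rel i -> A i z = 0) ->
  (forall l i (M : 'M[R]_((m i).+2, p l)),
      differentiable (fun M' : 'M[R]_((m i).+2, p l) => psi l i (fun j => row j M')) M) ->
  (forall l (M : 'rV[R]_(\sum_(i < k) q l i)),
      differentiable (fun M' : 'rV[R]_(\sum_(i < k) q l i) =>
        phi l (fun i => @submxrow R k (q l) 1 M' i)) M) ->
  (forall l i (a : 'I_(m i).+2 -> 'rV[R]_(p l)) (j : 'I_(m i).+2),
      norm1 (jac (fun v => psi l i (upd a j v)) (a j)) <= betai l i) ->
  (forall l (a : forall i : 'I_k, 'rV[R]_(q l i)) (i : 'I_k),
      norm1 (jac (fun v => phi l (@dfwith 'I_k (fun i0 => 'rV[R]_(q l i0)) a i v)) (a i))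
        <= alpha l) ->
  forall s t : S,
  0 < w A s t ->
  0 < w3max A s t ->
  forall x : S -> 'rV[R]_(p 0%N),
  norm1 (jac (fun v => feat A psi phi (upd x t v) 2 s) (x t))
    <= (\prod_(l < 2) (alpha l * \big[Num.max/0]_(i < k) betai l i))
       * wout A t * win A s
       * (1 - w A s t / w3max A s t * (1 - curv A s t)).
Proof.
move=> A_ge0 _ psi_diff phi_diff psi_jac phi_jac s t wst w3_gt0 x.
pose beta l := \big[Num.max/0]_(i < k) betai l i.
have psi_jac_max l i a j : norm1 (jac (fun v => psi l i (upd a j v)) (a j)) <= beta l.
  exact: le_trans (psi_jac l i a j) (le_bigmax _ _ i).
pose i0 := Ordinal (gamma_gt0_relations A (gamma_gt0 A A_ge0 wst)).
have alpha_ge0 l : 0 <= alpha l := le_trans (norm1_ge0 _) (phi_jac l (fun _ => 0) i0).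
have prod_ge0 : 0 <= \prod_(l < 2) (alpha l * beta l).
  by apply: prodr_ge0 => l _; rewrite mulr_ge0 ?bigmax_ge_id.
have feat_bound := diff_bounded_feat A A_ge0 psi_diff phi_diff psi_jac_max phi_jac x t 2 s.
apply: le_trans (diff_bounded_jac _ feat_bound) _.
  by rewrite mulr_ge0 ?msg_weight_pow_ge0.
rewrite -2![X in _ <= X]mulrA; apply: (ler_wpM2l prod_ge0).
apply: le_trans (msg_weight_pow2_le A A_ge0 s t) _.
by rewrite mulrA; exact: two_step_weight_le.
Qed.
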